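(* Let $S(z)$ be a Rosenbrock system matrix and $\lambda\in\mathbb{C}$ with $S(\lambda)$ invertible. (i) If $\eta^{\mathbb{S}}(\lambda,B)<\infty$, then $\eta^{\mathbb{S}}(\lambda,B)=1/\sigma_{\max}\big([0_{n,r}\ I_n]\,S(\lambda)^{-1}[I_r\ 0_{r,n}]^T\big)$. (ii) If $\eta^{\mathbb{S}}(\lambda,C)<\infty$, then $\eta^{\mathbb{S}}(\lambda,C)=1/\sigma_{\max}\big([I_r\ 0_{r,n}]\,S(\lambda)^{-1}[0_{n,r}\ I_n]^T\big)$. (iii) If $\eta^{\mathbb{S}}(\lambda,P)<\infty$, let $J_1:=\operatorname{diag}\Big(\begin{bmatrix}0_{r,n}\\ I_n\end{bmatrix},\tilde J_1\Big)\in\mathbb{C}^{(d+1)(r+n),(d+1)n}$ and $J_2:=\begin{bmatrix}[0_{n,r}\ I_n]\\ \tilde J_2\end{bmatrix}\in\mathbb{C}^{(d+1)n,r+n}$. Then $\eta^{\mathbb{S}}(\lambda,P)=(\mu_{\mathcal{S}}(M))^{-1}$, where $M:=J_2S(\lambda)^{-1}[I_{r+n}\ \lambda I_{r+n}\ \cdots\ \lambda^dI_{r+n}]J_1$ and $\mathcal{S}=\{\operatorname{diag}(\Delta_1,\ldots,\Delta_{d+1}) : \Delta_i\in\mathbb{C}^{n,n}\}$.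
   Context: A Rosenbrock system matrix is $S(z)=\begin{bmatrix}A-zI_r & B\\ C & P(z)\end{bmatrix}$ with $A\in\mathbb{C}^{r,r}$, $B\in\mathbb{C}^{r,n}$, $C\in\mathbb{C}^{n,r}$, $P(z)=\sum_{k=0}^d z^kA_k$, $A_k\in\mathbb{C}^{n,n}$. $\|\cdot\|$ is the spectral norm, $\sigma_{\max}$ the largest singular value, $0_{m,n}$ the $m\times n$ zero matrix. Backward errors with perturbation of one block only (with $\inf\emptyset=\infty$): $\eta^{\mathbb{S}}(\lambda,B):=\inf\{\|\Delta_B\| : \Delta_B\in\mathbb{C}^{r,n},\ \det(S(\lambda)-\begin{bmatrix}0&\Delta_B\\0&0\end{bmatrix})=0\}$; $\eta^{\mathbb{S}}(\lambda,C):=\inf\{\|\Delta_C\| : \Delta_C\in\mathbb{C}^{n,r},\ \det(S(\lambda)-\begin{bmatrix}0&0\\ \Delta_C&0\end{bmatrix})=0\}$; $\eta^{\mathbb{S}}(\lambda,P):=\inf\{\max_j\|\Delta_{A_j}\| : \Delta_{A_j}\in\mathbb{C}^{n,n},\ \det(S(\lambda)-\begin{bmatrix}0&0\\0&\sum_{j=0}^d\lambda^j\Delta_{A_j}\end{bmatrix})=0\}$. $\tilde J_1\in\mathbb{C}^{(r+n)d,\,nd}$ is the block-diagonal matrix with $d$ diagonal blocks each equal to $\begin{bmatrix}0_{r,n}\\ I_n\end{bmatrix}$; $\tilde J_2\in\mathbb{C}^{nd,\,r+n}$ is the vertical stack of $d$ copies of $[0_{n,r}\ I_n]$. Structured $\mu$-value: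 for $M\in\mathbb{C}^{k,p}$ and $\mathcal{S}\subseteq\mathbb{C}^{p,k}$, $\mu_{\mathcal{S}}(M):=\big(\inf\{\|\Delta\| : \Delta\in\mathcal{S},\ \det(I_p-\Delta M)=0\}\big)^{-1}$, with $\mu_{\mathcal S}(M)=0$ if no such $\Delta$ exists. *)

From HB Require Import structures.
From mathcomp Require Import all_boot all_order all_algebra.
From mathcomp Require Import classical_sets boolp reals constructive_ereal ereal.
From mathcomp Require Import complex.
Set Implicit Arguments.
Unset Strict Implicit.
Unset Printing Implicit Defensive.
Import Order.TTheory GRing.Theory Num.Theory.
Local Open Scope ring_scope.
Local Open Scope classical_set_scope.

Section Defs.
Variable R : realType.
Local Notation C := R[i].

Definition vnorm m (x : 'cV[C]_m) : R :=
  Num.sqrt (\sum_(i < m) (complex.Re (x i 0) ^+ 2 + complex.Im (x i 0) ^+ 2)).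

Definition specnorm m p (X : 'M[C]_(m, p)) : R :=
  sup [set vnorm (X *m x) | x in [set x : 'cV[C]_p | vnorm x <= 1]].

Definition ctrmx m p (X : 'M[C]_(m, p)) : 'M[C]_(p, m) :=
  map_mx (@conjc R) X^T.

(* largest singular value: square root of the largest eigenvalue of X^* X
   (these eigenvalues are real and nonnegative) *)
Definition sigma_max m p (X : 'M[C]_(m, p)) : R :=
  sup [set Num.sqrt (complex.Re a) | a in [set a : C | eigenvalue (ctrmx X *m X) a]].

(* Rosenbrock system matrix S(z) with P(z) = \sum_{k=0}^d z^k A_k *)
Definition rosenbrock r n d (A : 'M[C]_r) (B : 'M[C]_(r, n))
  (Cm : 'M[C]_(n, r)) (Ak : 'I_d.+1 -> 'M[C]_n) (z : C) : 'M[C]_(r + n) :=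
  block_mx (A - z%:M) B Cm (\sum_(k < d.+1) z ^+ k *: Ak k).

(* backward errors, perturbing one block only (inf of the empty set = +oo) *)
Definition etaB r n (S : 'M[C]_(r + n)) : \bar R :=
  ereal_inf [set (specnorm DB)%:E | DB in
    [set DB : 'M[C]_(r, n) |
      \det (S - block_mx (0 : 'M[C]_(r, r)) DB (0 : 'M[C]_(n, r)) (0 : 'M[C]_n)) = 0]].

Definition etaC r n (S : 'M[C]_(r + n)) : \bar R :=
  ereal_inf [set (specnorm DC)%:E | DC in
    [set DC : 'M[C]_(n, r) |
      \det (S - block_mx (0 : 'M[C]_(r, r)) (0 : 'M[C]_(r, n)) DC (0 : 'M[C]_n)) = 0]].

Definition etaP r n d (S : 'M[C]_(r + n)) (lam : C) : \bar R :=
  ereal_inf [set (\big[Num.max/0]_(j < d.+1) specnorm (DA j))%:E | DA in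
    [set DA : 'I_d.+1 -> 'M[C]_n |
      \det (S - block_mx (0 : 'M[C]_(r, r)) (0 : 'M[C]_(r, n)) (0 : 'M[C]_(n, r))
                  (\sum_(j < d.+1) lam ^+ j *: DA j)) = 0]].

(* structured mu-value; mu = 0 if no admissible Delta exists *)
Definition mu_value k p (SS : set 'M[C]_(p, k)) (M : 'M[C]_(k, p)) : R :=
  let D := [set Dl : 'M[C]_(p, k) | SS Dl /\ \det (1%:M - Dl *m M) = 0] in
  if `[< D = set0 >] then 0
  else (fine (ereal_inf [set (specnorm Dl)%:E | Dl in D]))^-1.

End Defs.

From HB Require Import structures.
From mathcomp Require Import all_boot all_order all_algebra.
From mathcomp Require Import classical_sets boolp reals constructive_ereal ereal.
From mathcomp Require Import complex.
From mathcomp Require Import ring.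
Import Order.TTheory GRing.Theory Num.Theory.
Local Open Scope ring_scope.
Local Open Scope classical_set_scope.

Set Implicit Arguments.
Unset Strict Implicit.
Unset Printing Implicit Defensive.

(** Each backward error is the distance to singularity of the invertible
    [S(lam)] under perturbations of the form [U D V].  By [det (1 - X Y) = 0 <->
    det (1 - Y X) = 0], [S - U D V] is singular iff [1 - G D] is, with
    [G = V S^-1 U].  For unstructured [D] the smallest such [D] has norm
    [1 / sigma_max G]: [x = G D x] forces [1 <= sigma_max G * |D|], and the
    rank-one [D = v u^* / sigma_max G], built from a top singular pair of [G],
    is singularizing with exactly that norm.  The largest singular value,
    defined through the eigenvalues of [G^* G], is identified with the largest
    gain [|G y| / |y|] by the spectral theorem for the Hermitian [G^* G].
    For the [P] block, [sum_j lam^j D_j] factors through the block diagonal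
    [diag (D_j)], whose spectral norm is the maximum of the [|D_j|]; this turns
    the infimum into the structured mu-value. *)

Section DetPerturbation.
Variable F : fieldType.

Lemma det0_col m (A : 'M[F]_m) :
  \det A = 0 -> exists2 x : 'cV[F]_m, x != 0 & A *m x = 0.
Proof.
rewrite -det_tr => /eqP /det0P [w wn0 hw]; exists w^T.
  by apply: contra wn0 => /eqP h; rewrite -(trmxK w) h trmx0.
by rewrite -(trmxK A) -trmx_mul hw trmx0.
Qed.

Lemma det0_of_col m (A : 'M[F]_m) (x : 'cV[F]_m) :
  x != 0 -> A *m x = 0 -> \det A = 0.
Proof.
move=> xn0 Ax0; apply/eqP; apply: contraR xn0 => detA.
have Au : A \in unitmx by rewrite unitmxE unitfE.
by rewrite -(mulKmx Au x) Ax0 mulmx0.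
Qed.

Lemma det1B_mulmxC a b (X : 'M[F]_(a, b)) (Y : 'M[F]_(b, a)) :
  (\det (1%:M - X *m Y) == 0) = (\det (1%:M - Y *m X) == 0).
Proof.
suff half a' b' (X' : 'M[F]_(a', b')) Y' :
    \det (1%:M - X' *m Y') == 0 -> \det (1%:M - Y' *m X') == 0.
  by apply/idP/idP; apply: half.
move=> /det0P [w wn0]; rewrite mulmxBr mulmx1 mulmxA => /eqP; rewrite subr_eq0.
move=> /eqP wXY; apply/det0P; exists (w *m X').
  by apply: contra wn0 => /eqP wX0; rewrite wXY wX0 mul0mx.
by rewrite mulmxBr mulmx1 mulmxA -wXY subrr.
Qed.

Lemma det_perturbation_unit N a b (S : 'M[F]_N) (U : 'M[F]_(N, a))
    (D : 'M[F]_(a, b)) (V : 'M[F]_(b, N)) : S \in unitmx ->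
  (\det (S - U *m D *m V) == 0) = (\det (1%:M - (V *m invmx S *m U) *m D) == 0).
Proof.
move=> Su; have -> : S - U *m D *m V = S *m (1%:M - invmx S *m U *m D *m V).
  by rewrite mulmxBr mulmx1 !mulmxA mulmxV // mul1mx.
have detS : \det S != 0 by rewrite -unitfE -unitmxE.
rewrite det_mulmx mulf_eq0 (negPf detS) /= (det1B_mulmxC (invmx S *m U *m D)).
by rewrite !mulmxA.
Qed.

End DetPerturbation.

Section BlockFactorizations.
Variable K : pzRingType.

Lemma block_mx_ur_mul r n (DB : 'M[K]_(r, n)) :
  block_mx (0 : 'M_r) DB (0 : 'M_(n, r)) (0 : 'M_n) =
  (row_mx (1%:M : 'M_r) (0 : 'M_(r, n)))^T *m DB *m row_mx (0 : 'M_(n, r)) 1%:M.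
Proof.
rewrite tr_row_mx trmx1 trmx0 mul_col_mx mul1mx mul0mx mul_col_row !mulmx0 !mulmx1.
by congr block_mx; apply/matrixP => i j; rewrite !mxE big1 // => k _; rewrite !mxE mul0r.
Qed.

Lemma block_mx_dl_mul r n (DC : 'M[K]_(n, r)) :
  block_mx (0 : 'M_r) (0 : 'M_(r, n)) DC (0 : 'M_n) =
  (row_mx (0 : 'M_(n, r)) (1%:M : 'M_n))^T *m DC *m row_mx (1%:M : 'M_r) (0 : 'M_(r, n)).
Proof.
rewrite tr_row_mx trmx1 trmx0 mul_col_mx mul1mx mul0mx mul_col_row !mulmx0 !mulmx1.
by congr block_mx; apply/matrixP => i j; rewrite !mxE big1 // => k _; rewrite !mxE mul0r.
Qed.

Lemma block_mx_dr_mul r n (W : 'M[K]_n) :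
  block_mx (0 : 'M_r) (0 : 'M_(r, n)) (0 : 'M_(n, r)) W =
  col_mx (0 : 'M_(r, n)) 1%:M *m W *m row_mx (0 : 'M_(n, r)) 1%:M.
Proof.
rewrite mul_col_mx mul1mx mul0mx mul_col_row !mulmx0 !mulmx1.
by congr block_mx; apply/matrixP => i j; rewrite !mxE big1 // => k _; rewrite !mxE mul0r.
Qed.

End BlockFactorizations.

Lemma mxrow_scale_mxblock_mxdiag_mxcol (K : comPzRingType) r n d (lam : K)
    (DA : 'I_d.+1 -> 'M[K]_n) :
  \mxrow_(j < d.+1) (lam ^+ j *: (1%:M : 'M_(r + n))) *m
    \mxblock_(i < d.+1, j < d.+1)
       (if i == j then col_mx (0 : 'M_(r, n)) (1%:M : 'M_n) else 0) *m
    (\mxdiag_(i < d.+1) DA i *m \mxcol_(i < d.+1) row_mx (0 : 'M_(n, r)) (1%:M : 'M_n)) =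
  block_mx (0 : 'M_r) (0 : 'M_(r, n)) (0 : 'M_(n, r)) (\sum_(j < d.+1) lam ^+ j *: DA j).
Proof.
rewrite mul_mxrow_mxblock mul_mxdiag_mxcol mul_mxrow_mxcol block_mx_dr_mul.
rewrite mulmx_sumr mulmx_suml; apply: eq_bigr => j _.
rewrite (bigD1 j) //= eqxx big1 ?addr0 => [|i /negPf ->]; last by rewrite mulmx0.
by rewrite -scalemxAl mul1mx -scalemxAr scalemxAl mulmxA.
Qed.

Section Norms.
Local Open Scope complex_scope.
Variable R : realType.
Local Notation C := R[i].

Lemma ctrmxE m p (X : 'M[C]_(m, p)) i j : ctrmx X i j = (X j i)^*.
Proof. by rewrite /ctrmx !mxE. Qed.

Lemma ctrmx_mul m p q (X : 'M[C]_(m, p)) (Y : 'M[C]_(p, q)) :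
  ctrmx (X *m Y) = ctrmx Y *m ctrmx X.
Proof. by rewrite /ctrmx trmx_mul map_mxM. Qed.

Lemma ctrmxK m p (X : 'M[C]_(m, p)) : ctrmx (ctrmx X) = X.
Proof. by apply/matrixP => i j; rewrite !ctrmxE conjcK. Qed.

Lemma ctrmx0 m p : ctrmx (0 : 'M[C]_(m, p)) = 0.
Proof. by apply/matrixP => i j; rewrite !(ctrmxE, mxE) conjc0. Qed.

Lemma ctrmxB m p (X Y : 'M[C]_(m, p)) : ctrmx (X - Y) = ctrmx X - ctrmx Y.
Proof. by apply/matrixP => i j; rewrite !(ctrmxE, mxE) rmorphB. Qed.

Lemma ctrmxZ m p c (X : 'M[C]_(m, p)) : ctrmx (c *: X) = c^* *: ctrmx X.
Proof. by apply/matrixP => i j; rewrite !(ctrmxE, mxE) rmorphM. Qed.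

(* The squared norm as the [1 x 1] matrix entry [x^* x], so that it can be
   manipulated with matrix identities. *)
Definition sqnorm m (x : 'cV[C]_m) : C := (ctrmx x *m x) 0 0.

Lemma sqnormE m (x : 'cV[C]_m) : sqnorm x = \sum_i `|x i 0| ^+ 2.
Proof. by rewrite /sqnorm mxE; apply: eq_bigr => i _; rewrite ctrmxE sqr_normc mulrC. Qed.

Lemma sqnorm_ge0 m (x : 'cV[C]_m) : 0 <= sqnorm x.
Proof. by rewrite sqnormE sumr_ge0 // => i _; rewrite exprn_ge0. Qed.

Lemma sqnorm_eq0 m (x : 'cV[C]_m) : (sqnorm x == 0) = (x == 0).
Proof.
apply/idP/eqP => [|->]; last by rewrite sqnormE big1 // => i _; rewrite mxE normr0 expr0n.
rewrite sqnormE psumr_eq0 => [/allP x0|i _]; last exact: exprn_ge0.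
apply/matrixP => i j; rewrite ord1 mxE.
by have /= := x0 i (mem_index_enum _); rewrite sqrf_eq0 normr_eq0 => /eqP.
Qed.

Lemma sqnormZ m c (x : 'cV[C]_m) : sqnorm (c *: x) = `|c| ^+ 2 * sqnorm x.
Proof. by rewrite !sqnormE mulr_sumr; apply: eq_bigr => i _; rewrite mxE normrM exprMn. Qed.

Lemma sqnorm_unitary m (P : 'M[C]_m) (y : 'cV[C]_m) :
  ctrmx P *m P = 1%:M -> sqnorm (P *m y) = sqnorm y.
Proof. by move=> PtP; rewrite /sqnorm ctrmx_mul mulmxA -(mulmxA _ _ P) PtP mulmx1. Qed.

Lemma sqnorm_delta p (i : 'I_p) : sqnorm (delta_mx i 0 : 'cV[C]_p) = 1.
Proof.
rewrite sqnormE (bigD1 i) //= big1 ?addr0 => [|j /negPf ji].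
  by rewrite mxE !eqxx normr1 expr1n.
by rewrite mxE ji normr0 expr0n.
Qed.

Lemma vnorm_ge0 m (x : 'cV[C]_m) : 0 <= vnorm x.
Proof. exact: sqrtr_ge0. Qed.

Lemma sqr_vnorm m (x : 'cV[C]_m) : ((vnorm x) ^+ 2)%:C = sqnorm x.
Proof.
rewrite /vnorm sqr_sqrtr; last by rewrite sumr_ge0 // => i _; rewrite addr_ge0 ?sqr_ge0.
by rewrite sqnormE rmorph_sum; apply: eq_bigr => i _; apply: add_Re2_Im2.
Qed.

Lemma vnorm_eq0 m (x : 'cV[C]_m) : (vnorm x == 0) = (x == 0).
Proof. by rewrite -sqnorm_eq0 -sqr_vnorm (inj_eq (@complexI R)) sqrf_eq0. Qed.

Lemma vnorm0 m : vnorm (0 : 'cV[C]_m) = 0.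
Proof. by apply/eqP; rewrite vnorm_eq0. Qed.

Lemma vnorm_leE m (x : 'cV[C]_m) (c : R) :
  0 <= c -> (vnorm x <= c) = (sqnorm x <= (c ^+ 2)%:C).
Proof. by move=> c0; rewrite -sqr_vnorm lecR ler_pXn2r // ?nnegrE ?vnorm_ge0. Qed.

Lemma vnorm_eqP m (x : 'cV[C]_m) (c : R) :
  0 <= c -> (vnorm x = c) <-> (sqnorm x = (c ^+ 2)%:C).
Proof.
move=> c0; rewrite -sqr_vnorm; split=> [->//|/complexI /eqP].
by rewrite eqrXn2 ?vnorm_ge0 // => /eqP.
Qed.

Lemma vnorm_le_sqnorm m q (x : 'cV[C]_m) (y : 'cV[C]_q) :
  sqnorm x <= sqnorm y -> vnorm x <= vnorm y.
Proof. by move=> xy; rewrite vnorm_leE ?vnorm_ge0 // sqr_vnorm. Qed.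

Lemma vnormZ m (t : R) (x : 'cV[C]_m) : vnorm (t%:C *: x) = `|t| * vnorm x.
Proof.
apply/vnorm_eqP; first by rewrite mulr_ge0 ?vnorm_ge0.
rewrite sqnormZ -sqr_vnorm real_normK; last by apply/complex_realP; exists t.
by rewrite -rmorphXn -rmorphM exprMn real_normK ?num_real.
Qed.

Lemma cauchy_schwarz p (u y : 'cV[C]_p) :
  sqnorm u = 1 -> `|(ctrmx u *m y) 0 0| ^+ 2 <= sqnorm y.
Proof.
move=> u1; set c := (ctrmx u *m y) 0 0.
have cE : (ctrmx u *m y) 0 0 = c by [].
have yu : (ctrmx y *m u) 0 0 = c^* by rewrite -ctrmxE ctrmx_mul ctrmxK.
suff -> : sqnorm y = sqnorm (y - c *: u) + c * c^*.
  by rewrite sqr_normc lerDr sqnorm_ge0.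
move: u1; rewrite /sqnorm ctrmxB ctrmxZ mulmxBl !mulmxBr -!scalemxAl -!scalemxAr.
by rewrite !mxE; rewrite !mxE in cE yu => ->; rewrite cE yu; ring.
Qed.

End Norms.

Section SigmaMax.
Local Open Scope complex_scope.
Variable R : realType.
Local Notation C := R[i].

Lemma sigma_max_flat m (G : 'M[C]_(m, 0)) : sigma_max G = 0.
Proof.
rewrite /sigma_max -[RHS]sup0; congr sup; apply/seteqP; split=> // x [a] + _.
by move=> /negP; apply; apply/eqP; apply: flatmx0.
Qed.

Section NonFlat.
Variables (m p : nat) (G : 'M[C]_(m, p.+1)).

Let H := ctrmx G *m G.
Let P := spectralmx H.
Let D := spectral_diag H.

Let PPt : P *m ctrmx P = 1%:M.
Proof. exact/unitarymxP/spectral_unitarymx. Qed.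

Let PtP : ctrmx P *m P = 1%:M.
Proof. exact: mulmx1C PPt. Qed.

Let H_spectral : H = ctrmx P *m diag_mx D *m P.
Proof.
have H_normal : H \is normalmx.
  have H_herm : ctrmx H = H by rewrite /H ctrmx_mul ctrmxK.
  by apply/normalmxP; change (H *m ctrmx H = ctrmx H *m H); rewrite H_herm.
have /orthomx_spectralP := H_normal.
by rewrite (invmx_unitary (spectral_unitarymx H)).
Qed.

Let sqnorm_mul_spectral y :
  sqnorm (G *m y) = \sum_i D 0 i * `|(P *m y) i 0| ^+ 2.
Proof.
have -> : sqnorm (G *m y) = (ctrmx (P *m y) *m diag_mx D *m (P *m y)) 0 0.
  by rewrite /sqnorm !ctrmx_mul mulmxA -(mulmxA _ (ctrmx G)) -/H H_spectral !mulmxA.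
rewrite mxE; apply: eq_bigr => i _.
by rewrite mul_mx_diag mxE ctrmxE sqr_normc; ring.
Qed.

Let v i : 'cV[C]_p.+1 := ctrmx P *m delta_mx i 0.

Let Pv i : P *m v i = delta_mx i 0.
Proof. by rewrite mulmxA PPt mul1mx. Qed.

Let spectral_diag_gain i : D 0 i = (vnorm (G *m v i) ^+ 2)%:C.
Proof.
rewrite sqr_vnorm sqnorm_mul_spectral Pv (bigD1 i) //= big1 ?addr0 => [|j /negPf ji].
  by rewrite mxE !eqxx normr1 expr1n mulr1.
by rewrite mxE ji normr0 expr0n mulr0.
Qed.

Let k0 := Order.arg_max ord0 xpredT (fun k => vnorm (G *m v k)).
Let s := vnorm (G *m v k0).

Let s_ge0 : 0 <= s. Proof. exact: vnorm_ge0. Qed.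

Let gain_le i : vnorm (G *m v i) <= s.
Proof. by rewrite /s /k0; case: arg_maxP => [|k _]; [|apply]. Qed.

Let D_le i : D 0 i <= (s ^+ 2)%:C.
Proof. by rewrite spectral_diag_gain lecR lerXn2r ?nnegrE ?vnorm_ge0 ?gain_le. Qed.

Let sqnorm_mul_le y : sqnorm (G *m y) <= (s ^+ 2)%:C * sqnorm y.
Proof.
rewrite sqnorm_mul_spectral -(sqnorm_unitary y PtP) sqnormE mulr_sumr.
by apply: ler_sum => i _; rewrite ler_wpM2r ?exprn_ge0.
Qed.

Let eigenvalue_top : eigenvalue H (s ^+ 2)%:C.
Proof.
apply/eigenvalueP; exists (delta_mx 0 k0 *m P).
  rewrite H_spectral !mulmxA -(mulmxA _ P) PPt mulmx1.
  have -> : (delta_mx 0 k0 : 'rV[C]_p.+1) *m diag_mx D = D 0 k0 *: delta_mx 0 k0.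
    apply/matrixP => i j; rewrite mul_mx_diag !mxE ord1 eqxx /=.
    by case: (eqVneq j k0) => [->|_] /=;
      rewrite ?(mulr1n, mulr0n, mul1r, mulr1, mul0r, mulr0).
  by rewrite -scalemxAl spectral_diag_gain.
apply/eqP => /(congr1 (mulmx^~ (ctrmx P))); rewrite -mulmxA PPt mulmx1 mul0mx.
by move=> /matrixP /(_ 0 k0) /eqP; rewrite !mxE !eqxx oner_eq0.
Qed.

Let eigenvalue_le a : eigenvalue H a -> complex.Re a <= s ^+ 2.
Proof.
move=> /eigenvalueP [w Hw wn0]; set y := ctrmx w.
have yE : sqnorm (G *m y) = a * sqnorm y.
  by rewrite /sqnorm ctrmx_mul /y ctrmxK mulmxA -(mulmxA w) -/H Hw -scalemxAl mxE.
have y_gt0 : 0 < sqnorm y.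
  rewrite lt_def sqnorm_eq0 sqnorm_ge0 andbT; apply: contra wn0 => /eqP y0.
  by rewrite -(ctrmxK w) -/y y0 ctrmx0.
by have := sqnorm_mul_le y; rewrite yE ler_pM2r // lecE => /andP[].
Qed.

Let sigma_maxE : sigma_max G = s.
Proof.
have sqrt_le a : eigenvalue H a -> Num.sqrt (complex.Re a) <= s.
  by move=> /eigenvalue_le Ha; rewrite -(ger0_norm s_ge0) -sqrtr_sqr ler_wsqrtr.
have s_in : [set Num.sqrt (complex.Re a) | a in [set a | eigenvalue H a]] s.
  by exists (s ^+ 2)%:C => //=; rewrite sqrtr_sqr ger0_norm.
apply/le_anti/andP; split.
  by apply: ge_sup; [exists s | move=> _ [a Ha <-]; apply: sqrt_le].
by apply: ub_le_sup => //; exists s => _ [a Ha <-]; apply: sqrt_le.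
Qed.

Lemma vnorm_mul_le_sigma_max_nonflat y : vnorm (G *m y) <= sigma_max G * vnorm y.
Proof.
rewrite sigma_maxE vnorm_leE ?mulr_ge0 ?vnorm_ge0 //.
by apply: le_trans (sqnorm_mul_le y) _; rewrite -sqr_vnorm -rmorphM -exprMn.
Qed.

Lemma sigma_max_attained :
  exists2 x : 'cV[C]_p.+1, vnorm x = 1 & vnorm (G *m x) = sigma_max G.
Proof.
exists (v k0) => //; apply/vnorm_eqP => //.
by rewrite -(sqnorm_unitary _ PtP) Pv sqnorm_delta expr1n.
Qed.

End NonFlat.

Lemma sigma_max_ge0 m p (G : 'M[C]_(m, p)) : 0 <= sigma_max G.
Proof.
case: p G => [|p] G; first by rewrite sigma_max_flat.
by have [x _ <-] := sigma_max_attained G; apply: vnorm_ge0.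
Qed.

Lemma vnorm_mul_le_sigma_max m p (G : 'M[C]_(m, p)) y :
  vnorm (G *m y) <= sigma_max G * vnorm y.
Proof.
case: p G y => [|p] G y; last exact: vnorm_mul_le_sigma_max_nonflat.
by rewrite flatmx0 mulmx0 vnorm0 mulr_ge0 ?sigma_max_ge0 ?vnorm_ge0.
Qed.

End SigmaMax.

Section SpecNorm.
Local Open Scope complex_scope.
Variable R : realType.
Local Notation C := R[i].

Section Bounds.
Variables (m p : nat) (X : 'M[C]_(m, p)).

Lemma specnorm_ub y : vnorm y <= 1 -> vnorm (X *m y) <= specnorm X.
Proof.
move=> y1; apply: ub_le_sup; last by exists y.
exists (sigma_max X) => _ [x x1 <-].
apply: le_trans (vnorm_mul_le_sigma_max X x) _.
by rewrite ler_piMr ?sigma_max_ge0.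
Qed.

Lemma specnorm_ge0 : 0 <= specnorm X.
Proof. by have := @specnorm_ub 0; rewrite mulmx0 !vnorm0 ler01; apply. Qed.

Lemma vnorm_mul_le_specnorm y : vnorm (X *m y) <= specnorm X * vnorm y.
Proof.
have [/eqP|y0] := eqVneq (vnorm y) 0.
  by rewrite vnorm_eq0 => /eqP ->; rewrite mulmx0 !vnorm0 mulr0.
have y_gt0 : 0 < vnorm y by rewrite lt_def y0 vnorm_ge0.
have := @specnorm_ub ((vnorm y)^-1%:C *: y).
rewrite -scalemxAr !vnormZ ger0_norm ?invr_ge0 ?vnorm_ge0 // mulVf // lexx.
by rewrite ler_pdivrMl // mulrC => ->.
Qed.

Lemma specnorm_le c :
  (forall y : 'cV[C]_p, vnorm y <= 1 -> vnorm (X *m y) <= c) -> specnorm X <= c.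
Proof.
move=> Xc; apply: ge_sup; last by move=> _ [y y1 <-]; apply: Xc.
by exists (vnorm (X *m 0)), 0 => //=; rewrite vnorm0.
Qed.

End Bounds.

Lemma singular_perturbation_ge m p (G : 'M[C]_(m, p)) (D : 'M[C]_(p, m)) :
  \det (1%:M - G *m D) = 0 -> 1 <= sigma_max G * specnorm D.
Proof.
move=> /det0_col [x xn0]; rewrite mulmxBl mul1mx => /eqP; rewrite subr_eq0.
move=> /eqP xE.
have x_gt0 : 0 < vnorm x by rewrite lt_def vnorm_eq0 xn0 vnorm_ge0.
rewrite -(ler_pM2r x_gt0) mul1r -mulrA.
rewrite {1}xE -mulmxA; apply: le_trans (vnorm_mul_le_sigma_max G (D *m x)) _.
by rewrite ler_wpM2l ?sigma_max_ge0 ?vnorm_mul_le_specnorm.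
Qed.

(* With [G v = s u] for unit vectors [u], [v] and [s = sigma_max G], the
   rank-one [D = v u^* / s] maps [u] to [v / s], so [(1 - G D) u = 0]. *)
Lemma rank_one_singular_perturbation m p (G : 'M[C]_(m, p)) :
  0 < sigma_max G ->
  exists2 D : 'M[C]_(p, m), \det (1%:M - G *m D) = 0 & specnorm D <= (sigma_max G)^-1.
Proof.
case: p G => [|p] G s_gt0; first by rewrite sigma_max_flat ltxx in s_gt0.
set s := sigma_max G in s_gt0 *.
have s_inv_ge0 : 0 <= s^-1 by rewrite invr_ge0 ltW.
have [v v1 Gv] := sigma_max_attained G.
pose u := (s^-1)%:C *: (G *m v).
have uE : (s^-1)%:C *: (G *m v) = u by [].
clearbody u.
have u1 : sqnorm u = 1.
  suff /(vnorm_eqP _ ler01) -> : vnorm u = 1 by rewrite expr1n.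
  by rewrite -uE vnormZ Gv ger0_norm // mulVf ?gt_eqF.
have uu : ctrmx u *m u = 1%:M by apply/matrixP => i j; rewrite !ord1 [LHS]u1 mxE.
exists ((s^-1)%:C *: (v *m ctrmx u)).
  apply: (@det0_of_col _ _ _ u); first by rewrite -sqnorm_eq0 u1 oner_neq0.
  rewrite mulmxBl mul1mx -scalemxAr -scalemxAl !mulmxA -(mulmxA _ _ u) uu mulmx1.
  by rewrite uE subrr.
apply: specnorm_le => y y1.
have -> : (s^-1)%:C *: (v *m ctrmx u) *m y = ((s^-1)%:C * (ctrmx u *m y) 0 0) *: v.
  rewrite -scalemxAl -mulmxA -scalerA; congr (_ *: _).
  by apply/matrixP => i j; rewrite !ord1 [LHS]mxE big_ord1 [RHS]mxE mulrC.
have s_inv_real : (s^-1)%:C \is Num.real by apply/complex_realP; exists s^-1.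
rewrite vnorm_leE // sqnormZ -sqr_vnorm v1 expr1n mulr1 normrM exprMn real_normK //.
rewrite rmorphXn ler_piMr ?exprn_ge0 ?lecR //.
apply: le_trans (cauchy_schwarz y u1) _.
by move: y1; rewrite vnorm_leE // expr1n.
Qed.

Lemma ereal_inf_singular_perturbation m p (G : 'M[C]_(m, p)) :
  let T := [set (specnorm D)%:E | D in [set D : 'M[C]_(p, m) | \det (1%:M - G *m D) = 0]] in
  (ereal_inf T < +oo)%E -> ereal_inf T = ((sigma_max G)^-1)%:E.
Proof.
move=> T /ereal_inf_lt [_ [D1 D1sing _] _].
have s_gt0 : 0 < sigma_max G.
  rewrite lt_def sigma_max_ge0 andbT.
  by apply: contraTneq (singular_perturbation_ge D1sing) => ->; rewrite mul0r ler10.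
have [D0 D0sing D0le] := rank_one_singular_perturbation s_gt0.
apply/le_anti/andP; split.
  by apply: ge_ereal_inf; exists (specnorm D0)%:E; [exists D0 | rewrite lee_fin].
apply: le_ereal_inf_tmp => _ [D Dsing <-].
by rewrite lee_fin -(ler_pM2l s_gt0) mulfV ?gt_eqF ?singular_perturbation_ge.
Qed.

End SpecNorm.

Section StructuredNorm.
Local Open Scope complex_scope.
Variable R : realType.
Local Notation C := R[i].

Lemma sqnorm_mxcol k n (y : 'I_k -> 'cV[C]_n) :
  sqnorm (\mxcol_i y i) = \sum_i sqnorm (y i).
Proof.
have ctrmx_mxcol : ctrmx (\mxcol_i y i) = \mxrow_i ctrmx (y i).
  by apply/matrixP => a b; rewrite !(ctrmxE, mxE).
by rewrite /sqnorm ctrmx_mxcol mul_mxrow_mxcol summxE.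
Qed.

Lemma specnorm_mxdiag k n (Ds : 'I_k -> 'M[C]_n) :
  specnorm (\mxdiag_i Ds i) = \big[Num.max/0]_i specnorm (Ds i).
Proof.
set M := \big[Num.max/0]_i specnorm (Ds i).
have M_ge0 : 0 <= M by apply: bigmax_ge_id.
apply/le_anti/andP; split.
  apply: specnorm_le => x x1; rewrite -(submxcolK x) mul_mxdiag_mxcol.
  apply: le_trans (_ : M * vnorm x <= M); last by rewrite ler_piMr.
  rewrite vnorm_leE ?mulr_ge0 ?vnorm_ge0 // exprMn rmorphM /= sqr_vnorm.
  rewrite -{2}(submxcolK x) !sqnorm_mxcol mulr_sumr; apply: ler_sum => i _.
  rewrite -!sqr_vnorm -rmorphM lecR -exprMn lerXn2r ?nnegrE ?mulr_ge0 ?vnorm_ge0 //.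
  apply: le_trans (vnorm_mul_le_specnorm _ _) _.
  by rewrite ler_wpM2r ?vnorm_ge0 // (le_bigmax _ (fun i => specnorm (Ds i)) i).
apply/bigmax_leP; split=> [|j _]; first exact: specnorm_ge0.
apply: specnorm_le => y y1.
pose x := \mxcol_i (if i == j then y else 0).
have sqnorm_x : sqnorm x = sqnorm y.
  rewrite sqnorm_mxcol (bigD1 j) //= eqxx big1 ?addr0 // => i /negPf ->.
  by apply/eqP; rewrite sqnorm_eq0.
have x1 : vnorm x <= 1 by apply: le_trans y1; apply: vnorm_le_sqnorm; rewrite sqnorm_x.
apply: le_trans (specnorm_ub _ x1); apply: vnorm_le_sqnorm.
rewrite mul_mxdiag_mxcol sqnorm_mxcol (bigD1 j) //= eqxx lerDl.
by apply: sumr_ge0 => i _; apply: sqnorm_ge0.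
Qed.

End StructuredNorm.

Section BackwardErrors.
Variable R : realType.
Local Notation C := R[i].

Lemma etaB_sigma_max r n (S : 'M[C]_(r + n)) : S \in unitmx -> (etaB S < +oo)%E ->
  etaB S = ((sigma_max (row_mx (0 : 'M_(n, r)) (1%:M : 'M_n)
               *m invmx S *m (row_mx (1%:M : 'M_r) (0 : 'M_(r, n)))^T))^-1)%:E.
Proof.
move=> Su; rewrite /etaB; set G := (X in sigma_max X).
suff -> : [set DB | \det (S - block_mx 0 DB 0 0) = 0] =
          [set DB : 'M_(r, n) | \det (1%:M - G *m DB) = 0].
  exact: ereal_inf_singular_perturbation.
by apply/seteqP; split=> DB /= /eqP det0; apply/eqP; move: det0;
  rewrite block_mx_ur_mul (det_perturbation_unit _ _ _ Su).
Qed.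

Lemma etaC_sigma_max r n (S : 'M[C]_(r + n)) : S \in unitmx -> (etaC S < +oo)%E ->
  etaC S = ((sigma_max (row_mx (1%:M : 'M_r) (0 : 'M_(r, n))
               *m invmx S *m (row_mx (0 : 'M_(n, r)) (1%:M : 'M_n))^T))^-1)%:E.
Proof.
move=> Su; rewrite /etaC; set G := (X in sigma_max X).
suff -> : [set DC | \det (S - block_mx 0 0 DC 0) = 0] =
          [set DC : 'M_(n, r) | \det (1%:M - G *m DC) = 0].
  exact: ereal_inf_singular_perturbation.
by apply/seteqP; split=> DC /= /eqP det0; apply/eqP; move: det0;
  rewrite block_mx_dl_mul (det_perturbation_unit _ _ _ Su).
Qed.

Lemma mu_value_invE k p (SS : set 'M[C]_(p, k)) (M : 'M[C]_(k, p)) :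
  let T := [set (specnorm D)%:E | D in [set D | SS D /\ \det (1%:M - D *m M) = 0]] in
  (ereal_inf T < +oo)%E -> ((mu_value SS M)^-1)%:E = ereal_inf T.
Proof.
move=> T T_fin; rewrite /mu_value; case: asboolP => [D0|_].
  by move: T_fin; rewrite /T D0 image_set0 ereal_inf0 ltxx.
have T_ge0 : (0 <= ereal_inf T)%E.
  by apply: le_ereal_inf_tmp => _ [D _ <-]; rewrite lee_fin specnorm_ge0.
by rewrite invrK fineK // ge0_fin_numE.
Qed.

End BackwardErrors.

Unset Implicit Arguments.
Set Strict Implicit.
Set Printing Implicit Defensive.

Theorem theorem2p3 (R : realType) (r n d : nat)
  (A : 'M[R[i]]_r) (B : 'M[R[i]]_(r, n)) (Cm : 'M[R[i]]_(n, r))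
  (Ak : 'I_d.+1 -> 'M[R[i]]_n) (lam : R[i]) :
  let S := rosenbrock A B Cm Ak lam in
  S \in unitmx ->
  (* (i) *)
  ((etaB S < +oo)%E ->
     etaB S = ((sigma_max (row_mx (0 : 'M[R[i]]_(n, r)) (1%:M : 'M[R[i]]_n)
                  *m invmx S *m (row_mx (1%:M : 'M[R[i]]_r) (0 : 'M[R[i]]_(r, n)))^T))^-1)%:E)
  /\
  (* (ii) *)
  ((etaC S < +oo)%E ->
     etaC S = ((sigma_max (row_mx (1%:M : 'M[R[i]]_r) (0 : 'M[R[i]]_(r, n))
                  *m invmx S *m (row_mx (0 : 'M[R[i]]_(n, r)) (1%:M : 'M[R[i]]_n))^T))^-1)%:E)
  /\
  (* (iii) *)
  ((etaP d S lam < +oo)%E ->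
     let J1 : 'M[R[i]]_(\sum_(i < d.+1) (r + n), \sum_(j < d.+1) n) :=
       \mxblock_(i < d.+1, j < d.+1)
          (if i == j then col_mx (0 : 'M[R[i]]_(r, n)) (1%:M : 'M[R[i]]_n)
           else 0) in
     let J2 : 'M[R[i]]_(\sum_(i < d.+1) n, r + n) :=
       \mxcol_(i < d.+1) row_mx (0 : 'M[R[i]]_(n, r)) (1%:M : 'M[R[i]]_n) in
     let Lam : 'M[R[i]]_(r + n, \sum_(j < d.+1) (r + n)) :=
       \mxrow_(j < d.+1) (lam ^+ j *: (1%:M : 'M[R[i]]_(r + n))) in
     let M := J2 *m invmx S *m Lam *m J1 in
     let SS : set 'M[R[i]]_(\sum_(i < d.+1) n) :=
       [set D | exists Ds : 'I_d.+1 -> 'M[R[i]]_n, D = \mxdiag_(i < d.+1) Ds i] in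
     etaP d S lam = ((mu_value SS M)^-1)%:E).
Proof.
move=> S Su; split; [exact: etaB_sigma_max | split; first exact: etaC_sigma_max].
move=> etaP_fin J1 J2 Lam M SS.
have singular DA : (\det (S - block_mx 0 0 0 (\sum_(j < d.+1) lam ^+ j *: DA j)) == 0) =
                   (\det (1%:M - \mxdiag_i DA i *m M) == 0).
  rewrite -(mxrow_scale_mxblock_mxdiag_mxcol r lam DA) -/Lam -/J1 -/J2 mulmxA.
  rewrite (det_perturbation_unit _ _ _ Su).
  have -> : J2 *m invmx S *m (Lam *m J1) = M by rewrite /M mulmxA.
  exact: det1B_mulmxC.
have etaE : etaP d S lam = ereal_inf [set (specnorm D)%:E | D in
              [set D | SS D /\ \det (1%:M - D *m M) = 0]].
  rewrite /etaP; congr ereal_inf; apply/seteqP; split=> _ [DA DAsing <-].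
    exists (\mxdiag_i DA i); last by rewrite specnorm_mxdiag.
    by split; [exists DA | apply/eqP; rewrite -singular; apply/eqP].
  case: DAsing => [[Ds ->] Dsing]; exists Ds; last by rewrite specnorm_mxdiag.
  by apply/eqP; rewrite singular; apply/eqP.
by rewrite etaE mu_value_invE // -etaE.
Qed.
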